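(* Assume (A.3). Then there is a finite constant $C_r>0$, independent of $h$, such that for all sufficiently small $h$, $r^2(\hat y_h,\hat u_h)\le C_rh^{2\lambda\eta}$.
   Context: Let $T>0$. $\mathcal{X}$: pairs $(y,u)$ with $y:[0,T]\to\mathbb{R}^{n_y}$, $y\in L^\infty$, $\dot y\in L^2$, $u\in L^\infty([0,T];\mathbb{R}^{n_u})$; $\|(y,u)\|_{\mathcal{X}}=\|\dot y\|_{L^2}+\operatorname{ess\,sup}_t\|(y(t),u(t))\|_\infty$, where $\|\dot y\|_{L^2}=(\int_0^T\|\dot y\|_2^2dt)^{1/2}$. Given $M,b$ on $\mathbb{R}^{n_y}\times\mathbb{R}^{n_y}$ (values in $\mathbb{R}$, $\mathbb{R}^{n_b}$), $f_1,f_2$ on $\mathbb{R}^{n_y}\times\mathbb{R}^{n_u}\times[0,T]$ (values in $\mathbb{R}^{n_y}$, $\mathbb{R}^{n_c}$) and bounds $y_L\le y_R$, $u_L\le u_R$, the optimal control problem minimizes $M(y(0),y(T))$ over $\mathcal{X}$ subject to $b(y(0),y(T))=0$, $\dot y=f_1(y,u,t)$ and $f_2(y,u,t)=0$ a.e., and the bounds for all $t$; $(y^\star,u^\star)$ is a local minimizer. $f(\dot y,y,u,t)=(f_1(y,u,t)-\dot y,f_2(y,u,t))$, $r(y,u)=(\int_0^T\|f(\dot y(t),y(t),u(t),t)\|_2^2dt+\|b(y(0),y(T))\|_2^2)^{1/2}$. Mesh $0=t_1<\dots<t_{N+1}=T$, $h=\max_i(t_{i+1}-t_i)$, degree $p$;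 $\mathcal{X}_{h,p}$: $y_h$ continuous and polynomial of degree $\le p$ on each mesh interval, $u_h$ polynomial of degree $\le p-1$ on each mesh interval; $\mathcal{B}_{h,p}\subset\mathcal{X}_{h,p}$ the pairs satisfying the bounds at the sampling points. (Approximability) there are $h_0,\eta,C_\eta>0$ such that for all $h\le h_0$ there is $(y_h,u_h)\in\mathcal{B}_{h,p}$ with $\|(y^\star,u^\star)-(y_h,u_h)\|_{\mathcal{X}}\le C_\eta h^\eta$; $(\hat y_h,\hat u_h)$ denotes a fixed such pair. (A.3): there are $\lambda\in(0,1]$, $C_\lambda>0$, $\epsilon>0$ with $|M(y^\star(0),y^\star(T))-M(a,a')|\le C_\lambda\|(y^\star(0)-a,y^\star(T)-a')\|_2^\lambda$ and $\|b(y^\star(0),y^\star(T))-b(a,a')\|_2\le C_\lambda\|(y^\star(0)-a,y^\star(T)-a')\|_2^\lambda$ whenever $\|(y^\star(0)-a,y^\star(T)-a')\|_2\le\epsilon$, and for each $t$, $\|(f_1(y^\star(t),u^\star(t),t)-f_1(v,w,t),f_2(y^\star(t),u^\star(t),t)-f_2(v,w,t))\|_2\le C_\lambda\|(y^\star(t)-v,u^\star(t)-w)\|_2^\lambda$ whenever $\|(y^\star(t)-v,u^\star(t)-w)\|_2\le\epsilon$. *)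

From HB Require Import structures.
From mathcomp Require Import all_boot all_order all_algebra.
From mathcomp Require Import all_classical all_reals all_analysis.
Set Implicit Arguments. Unset Strict Implicit. Unset Printing Implicit Defensive.
Import Order.TTheory GRing.Theory Num.Theory.
Import numFieldNormedType.Exports.
Local Open Scope classical_set_scope.
Local Open Scope ring_scope.

Section OCPDefs.
Variable R : realType.
Local Notation mu := (@lebesgue_measure R).

Definition Icc (a b : R) : set R := `[a, b].

Definition vsub n (v w : 'I_n -> R) : 'I_n -> R := fun i => v i - w i.

Definition norm2 n (v : 'I_n -> R) : R := Num.sqrt (\sum_i v i ^+ 2).
Definition norm2_pair n m (v : 'I_n -> R) (w : 'I_m -> R) : R :=
  Num.sqrt (\sum_i v i ^+ 2 + \sum_j w j ^+ 2).

Definition norminf_pair n m (v : 'I_n -> R) (w : 'I_m -> R) : R :=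
  Num.max (\big[Num.max/0]_i `|v i|) (\big[Num.max/0]_j `|w j|).

Definition esssup_on (D : set R) (g : R -> R) : \bar R :=
  ereal_inf [set M : \bar R | {ae mu, forall t, D t -> ((g t)%:E <= M)%E}].

Definition L2sq (T : R) n (v : R -> 'I_n -> R) : \bar R :=
  (\int[mu]_(t in (Icc 0 T)) ((norm2 (v t)) ^+ 2)%:E)%E.

Definition esqrt (x : \bar R) : \bar R :=
  match x with
  | EFin r => (Num.sqrt r)%:E
  | EPInf => +oo%E
  | ENInf => 0%E
  end.

(* (y, u) in X, with dy the (weak) derivative of y:
   y is absolutely continuous on [0,T] with derivative dy in L^2,
   y, u measurable and essentially bounded on [0,T]. *)
Definition memX (T : R) ny nu (y dy : R -> 'I_ny -> R) (u : R -> 'I_nu -> R) : Prop :=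
  [/\ (forall i, measurable_fun (Icc 0 T) (fun t => y t i)) /\
        (forall j, measurable_fun (Icc 0 T) (fun t => u t j)),
      (forall i, mu.-integrable (Icc 0 T) (fun t => (dy t i)%:E)),
      (forall i t, 0 <= t <= T ->
         (y t i)%:E = ((y 0 i)%:E + \int[mu]_(s in (Icc 0 t)) (dy s i)%:E)%E),
      (L2sq T dy < +oo)%E &
      (esssup_on (Icc 0 T) (fun t => norminf_pair (y t) (u t)) < +oo)%E ].

Definition Xdist (T : R) ny nu (y dy : R -> 'I_ny -> R) (u : R -> 'I_nu -> R)
    (y' dy' : R -> 'I_ny -> R) (u' : R -> 'I_nu -> R) : \bar R :=
  (esqrt (L2sq T (fun t => vsub (dy t) (dy' t)))
   + esssup_on (Icc 0 T) (fun t => norminf_pair (vsub (y t) (y' t)) (vsub (u t) (u' t))))%E.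

Definition in_bounds ny nu (yL yR : 'I_ny -> R) (uL uR : 'I_nu -> R)
    (yt : 'I_ny -> R) (ut : 'I_nu -> R) : Prop :=
  (forall i, yL i <= yt i <= yR i) /\ (forall j, uL j <= ut j <= uR j).

Definition feasible (T : R) ny nu nb nc
    (b : ('I_ny -> R) -> ('I_ny -> R) -> 'I_nb -> R)
    (f1 : ('I_ny -> R) -> ('I_nu -> R) -> R -> 'I_ny -> R)
    (f2 : ('I_ny -> R) -> ('I_nu -> R) -> R -> 'I_nc -> R)
    yL yR uL uR (y dy : R -> 'I_ny -> R) (u : R -> 'I_nu -> R) : Prop :=
  [/\ b (y 0) (y T) = (fun _ => 0),
      {ae mu, forall t, 0 <= t <= T -> dy t = f1 (y t) (u t) t},
      {ae mu, forall t, 0 <= t <= T -> f2 (y t) (u t) t = (fun _ => 0)} &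
      (forall t, 0 <= t <= T -> in_bounds yL yR uL uR (y t) (u t)) ].

Definition local_minimizer (T : R) ny nu nb nc
    (M : ('I_ny -> R) -> ('I_ny -> R) -> R)
    (b : ('I_ny -> R) -> ('I_ny -> R) -> 'I_nb -> R)
    (f1 : ('I_ny -> R) -> ('I_nu -> R) -> R -> 'I_ny -> R)
    (f2 : ('I_ny -> R) -> ('I_nu -> R) -> R -> 'I_nc -> R)
    yL yR uL uR (ys dys : R -> 'I_ny -> R) (us : R -> 'I_nu -> R) : Prop :=
  [/\ memX T ys dys us,
      feasible T b f1 f2 yL yR uL uR ys dys us &
      exists2 delta : R, 0 < delta &
        forall y dy u, memX T y dy u -> feasible T b f1 f2 yL yR uL uR y dy u ->
          (Xdist T y dy u ys dys us <= delta%:E)%E ->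
          M (ys 0) (ys T) <= M (y 0) (y T) ].

Definition rsq (T : R) ny nu nb nc
    (b : ('I_ny -> R) -> ('I_ny -> R) -> 'I_nb -> R)
    (f1 : ('I_ny -> R) -> ('I_nu -> R) -> R -> 'I_ny -> R)
    (f2 : ('I_ny -> R) -> ('I_nu -> R) -> R -> 'I_nc -> R)
    (y dy : R -> 'I_ny -> R) (u : R -> 'I_nu -> R) : \bar R :=
  (\int[mu]_(t in (Icc 0 T))
      ((norm2_pair (vsub (f1 (y t) (u t) t) (dy t)) (f2 (y t) (u t) t)) ^+ 2)%:E
   + ((norm2 (b (y 0) (y T))) ^+ 2)%:E)%E.

Definition is_mesh (T : R) (N : nat) (tm : nat -> R) (h : R) : Prop :=
  [/\ (0 < N)%N, tm 0%N = 0, tm N = T,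
      (forall k, (k < N)%N -> tm k < tm k.+1) &
      h = \big[Num.max/0]_(k < N) (tm k.+1 - tm k) ].

Definition in_Xhp (T : R) (p N : nat) (tm : nat -> R) ny nu
    (y : R -> 'I_ny -> R) (u : R -> 'I_nu -> R) : Prop :=
  [/\ (forall i, {within (Icc 0 T), continuous (fun t => y t i)}),
      (forall k i, (k < N)%N -> exists P : {poly R}, (size P <= p.+1)%N /\
          forall t, tm k <= t <= tm k.+1 -> y t i = P.[t]) &
      (forall k j, (k < N)%N -> exists Q : {poly R}, (size Q <= p)%N /\
          forall t, tm k < t < tm k.+1 -> u t j = Q.[t]) ].

Definition in_Bhp (T : R) (p N : nat) (tm : nat -> R) (samp : set R) ny nu
    yL yR uL uR (y : R -> 'I_ny -> R) (u : R -> 'I_nu -> R) : Prop :=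
  in_Xhp T p N tm y u /\
  (forall t, samp t -> in_bounds yL yR uL uR (y t) (u t)).

Definition A3 (T : R) ny nu nb nc
    (M : ('I_ny -> R) -> ('I_ny -> R) -> R)
    (b : ('I_ny -> R) -> ('I_ny -> R) -> 'I_nb -> R)
    (f1 : ('I_ny -> R) -> ('I_nu -> R) -> R -> 'I_ny -> R)
    (f2 : ('I_ny -> R) -> ('I_nu -> R) -> R -> 'I_nc -> R)
    (ys : R -> 'I_ny -> R) (us : R -> 'I_nu -> R) (lam Cl eps : R) : Prop :=
  [/\ [/\ 0 < lam <= 1, 0 < Cl & 0 < eps],
      (forall a a' : 'I_ny -> R,
         norm2_pair (vsub (ys 0) a) (vsub (ys T) a') <= eps ->
         `|M (ys 0) (ys T) - M a a'|
           <= Cl * norm2_pair (vsub (ys 0) a) (vsub (ys T) a') `^ lam),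
      (forall a a' : 'I_ny -> R,
         norm2_pair (vsub (ys 0) a) (vsub (ys T) a') <= eps ->
         norm2 (vsub (b (ys 0) (ys T)) (b a a'))
           <= Cl * norm2_pair (vsub (ys 0) a) (vsub (ys T) a') `^ lam) &
      (forall t, 0 <= t <= T -> forall v w,
         norm2_pair (vsub (ys t) v) (vsub (us t) w) <= eps ->
         norm2_pair (vsub (f1 (ys t) (us t) t) (f1 v w t))
                    (vsub (f2 (ys t) (us t) t) (f2 v w t))
           <= Cl * norm2_pair (vsub (ys t) v) (vsub (us t) w) `^ lam) ].

End OCPDefs.

From HB Require Import structures.
From mathcomp Require Import all_boot all_order all_algebra.
From mathcomp Require Import all_classical all_reals all_analysis.
From mathcomp Require Import ring lra measurable_realfun.
Set Implicit Arguments. Unset Strict Implicit. Unset Printing Implicit Defensive.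
Import Order.TTheory GRing.Theory Num.Theory.
Import numFieldNormedType.Exports.
Local Open Scope classical_set_scope.
Local Open Scope ring_scope.

(* Let (ys, us) be the minimizer and (yh, uh) its approximation, and put
   c = Ceta h^eta.  The bound on their X-distance controls
   ||dys - dyh||_{L^2} by c and the deviation |(ys - yh, us - uh)| by 2c
   almost everywhere; as ys - yh is continuous, the latter bound also holds at
   the endpoints 0 and T.  For small h these deviations are below eps, so (A.3)
   and the feasibility of (ys, us) give |b(yh(0), yh(T))| <= A and
   |(f1(yh, uh) - dys, f2(yh, uh))| <= A a.e., with A = O(h^(lam eta)).
   Splitting f1(yh, uh) - dyh through dys then yields
   r^2 <= (2T + 1) A^2 + 2 c^2 = O(h^(2 lam eta)), because h <= 1 and lam <= 1. *)

Section lebesgue_facts.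
Variable R : realType.
Local Notation mu := (@lebesgue_measure R).

Lemma ae_itv_exists (a b : R) (P : R -> Prop) :
  a < b -> {ae mu, forall t, P t} -> exists2 t, a < t < b & P t.
Proof.
move=> ab [N [mN N0 sN]]; have [//|nP] := pselect (exists2 t, a < t < b & P t).
have sub : `]a, b[ `<=` N.
  by move=> t /=; rewrite in_itv /= => abt; apply: sN => Pt; apply: nP; exists t.
have : (mu `]a, b[ <= 0)%E.
  by rewrite -N0; apply: le_measure => //; rewrite inE //; exact: measurable_itv.
by rewrite lebesgue_measure_itv /= lte_fin ab -EFinD lee_fin subr_le0 leNgt ab.
Qed.

Lemma continuous_within_ae_normr_le (a b C : R) (phi : R -> R) :
  a < b -> {within Icc a b, continuous phi} ->
  {ae mu, forall t, Icc a b t -> `|phi t| <= C} ->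
  forall x, Icc a b x -> `|phi x| <= C.
Proof.
move=> ab /subspace_continuousP cphi aeC x abx.
apply/ler_addgt0Pr => e e0.
have /nbhs_ballP[d /= d0 near_x] :
    \forall t \near x, Icc a b t -> `|phi x - phi t| < e.
  by move: (cphi x abx) => /cvgr_dist_lt /(_ _ e0).
pose l := Num.max a (x - d / 2); pose r := Num.min b (x + d / 2).
have [abx1 abx2] : a <= x /\ x <= b by move: abx; rewrite /Icc /= in_itv /= => /andP.
have lr : l < r by rewrite /l /r gt_max !lt_min; apply/andP; split; apply/andP; split; lra.
have [t /andP[lt_ tr] Ct] := ae_itv_exists lr aeC.
move: lt_ tr; rewrite /l /r gt_max lt_min => /andP[ta xt] /andP[tb tx].
have abt : Icc a b t by rewrite /Icc /= in_itv /= !ltW.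
have xte : `|phi x - phi t| < e.
  apply: near_x abt; rewrite /ball /= ltr_norml; apply/andP; split; lra.
have := ler_normD (phi x - phi t) (phi t); rewrite subrK.
by have := Ct abt; lra.
Qed.

Lemma esssup_on_ge0 (a b : R) (g : R -> R) : a < b ->
  (forall t, 0 <= g t) -> (0 <= esssup_on (Icc a b) g)%E.
Proof.
move=> ab g0; apply/ereal_infP => M aeM; rewrite leNgt; apply/negP => M0.
have [t /andP[ta tb] gM] := ae_itv_exists ab aeM.
have abt : Icc a b t by rewrite /Icc /= in_itv /= !ltW.
by have := le_lt_trans (gM abt) M0; rewrite lte_fin ltNge g0.
Qed.

Lemma esssup_on_le_ae (D : set R) (g : R -> R) (c c' : R) :
  (esssup_on D g <= c%:E)%E -> c < c' -> {ae mu, forall t, D t -> g t <= c'}.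
Proof.
move=> gc cc'; have /ereal_inf_lt[M aeM Mc'] : (esssup_on D g < c'%:E)%E.
  by rewrite (le_lt_trans gc) // lte_fin.
apply: (filterS (F := almost_everywhere mu) _ aeM) => t gM Dt.
by rewrite -lee_fin (le_trans (gM Dt)) // ltW.
Qed.

End lebesgue_facts.

Section ae_ge0_le_integral_measurable_upper.
Local Open Scope ereal_scope.
Context d (T : measurableType d) (R : realType).
Variables (mu : {measure set T -> \bar R}) (D : set T) (f g : T -> \bar R).
Hypotheses (mD : measurable D) (f0 : forall x, D x -> 0 <= f x)
  (g0 : forall x, D x -> 0 <= g x) (mg : measurable_fun D g).
Import HBNNSimple.

(* Unlike [ae_ge0_le_integral], [f] need not be measurable: its integral is
   the supremum of the integrals of the simple functions below it. *)
Lemma ae_ge0_le_integral_measurable_upper :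
  {ae mu, forall x, D x -> f x <= g x} ->
  \int[mu]_(x in D) f x <= \int[mu]_(x in D) g x.
Proof.
move=> fg; rewrite ge0_integralE //; apply: ge_ereal_sup => _ [h /= hf <-].
have hD x : ~ D x -> h x = 0%R.
  move=> Dx; apply/eqP; rewrite eq_le; apply/andP; split => //.
  by have := hf x; rewrite /patch; case: ifPn => [/set_mem //|_]; rewrite lee_fin.
rewrite -integralT_nnsfun.
have -> : \int[mu]_x (h x)%:E = \int[mu]_(x in D) (h x)%:E.
  rewrite [RHS]integral_mkcond; apply: eq_integral => x _.
  rewrite /patch; case: ifPn => // /negP Dx.
  by rewrite hD // => Dx'; apply: Dx; rewrite inE.
apply: ae_ge0_le_integral => //.
- by move=> x _; rewrite lee_fin.
- by apply/measurable_EFinP; apply: measurable_funTS.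
- apply: filterS fg => x fgx Dx; apply: le_trans (fgx Dx).
  by have := hf x; rewrite /patch; case: ifPn => // /negP; rewrite inE.
Qed.

End ae_ge0_le_integral_measurable_upper.

Section euclidean_norms.
Variable R : realType.

Lemma sumsq_ge0 n (v : 'I_n -> R) : 0 <= \sum_i v i ^+ 2.
Proof. by apply: sumr_ge0 => i _; exact: sqr_ge0. Qed.

Lemma norm2_sqr n (v : 'I_n -> R) : norm2 v ^+ 2 = \sum_i v i ^+ 2.
Proof. by rewrite /norm2 sqr_sqrtr // sumsq_ge0. Qed.

Lemma norm2_pair_sqr n m (v : 'I_n -> R) (w : 'I_m -> R) :
  norm2_pair v w ^+ 2 = \sum_i v i ^+ 2 + \sum_j w j ^+ 2.
Proof. by rewrite /norm2_pair sqr_sqrtr // addr_ge0 // sumsq_ge0. Qed.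

Lemma norm2_vsub0l n (v : 'I_n -> R) : norm2 (vsub (fun=> 0) v) = norm2 v.
Proof.
by rewrite /norm2 /vsub; congr Num.sqrt; apply: eq_bigr => i _; rewrite sub0r sqrrN.
Qed.

Lemma sumsq_le n (v : 'I_n -> R) c : (forall i, `|v i| <= c) ->
  \sum_i v i ^+ 2 <= n%:R * c ^+ 2.
Proof.
move=> vc; apply: le_trans (_ : _ <= \sum_(i < n) c ^+ 2) _.
  by apply: ler_sum => i _; have := vc i; rewrite ler_norml; nra.
by rewrite sumr_const card_ord mulr_natl.
Qed.

Lemma norm2_pair_le n m k (v : 'I_n -> R) (w : 'I_m -> R) c :
  (n + m <= k)%N -> 0 <= c -> (forall i, `|v i| <= c) -> (forall j, `|w j| <= c) ->
  norm2_pair v w <= Num.sqrt k%:R * c.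
Proof.
move=> nmk c0 vc wc.
rewrite -(ger0_norm c0) -sqrtr_sqr -sqrtrM ?ler0n // ler_sqrt ?mulr_ge0 ?sqr_ge0 //.
apply: le_trans (_ : (n + m)%:R * c ^+ 2 <= _).
  by rewrite natrD mulrDl; apply: lerD; apply: sumsq_le.
by rewrite ler_wpM2r ?sqr_ge0 // ler_nat.
Qed.

Lemma norminf_pair_ge0 n m (v : 'I_n -> R) (w : 'I_m -> R) : 0 <= norminf_pair v w.
Proof.
rewrite /norminf_pair le_max; apply/orP; left.
by elim/big_ind: _ => [//|x y x0 y0|i _]; rewrite ?le_max ?x0 ?normr_ge0.
Qed.

Lemma norminf_pair_le_coord n m (v : 'I_n -> R) (w : 'I_m -> R) c :
  norminf_pair v w <= c -> (forall i, `|v i| <= c) /\ (forall j, `|w j| <= c).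
Proof.
rewrite /norminf_pair ge_max => /andP[vc wc]; split.
  by move=> i; apply: le_trans vc; exact: le_bigmax.
by move=> j; apply: le_trans wc; exact: le_bigmax.
Qed.

Lemma sqr_norm2_pair_triangle n m (v z w : 'I_n -> R) (u : 'I_m -> R) :
  norm2_pair (vsub v w) u ^+ 2 <=
  2 * norm2_pair (vsub z v) (vsub (fun=> 0) u) ^+ 2 + 2 * norm2 (vsub z w) ^+ 2.
Proof.
rewrite !norm2_pair_sqr norm2_sqr /vsub !mulrDr !mulr_sumr.
rewrite -addrA [X in _ <= _ + X]addrC addrA.
apply: lerD; last by apply: ler_sum => j _ /=; rewrite sub0r sqrrN; nra.
rewrite -big_split /=; apply: ler_sum => i _.
have := sqr_ge0 (z i - v i + (z i - w i)); nra.
Qed.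

End euclidean_norms.

Section X_distance.
Variable R : realType.
Local Notation mu := (@lebesgue_measure R).

Lemma esqrt_ge0 (x : \bar R) : (0 <= esqrt x)%E.
Proof. by case: x => [r| |] //=; rewrite lee_fin sqrtr_ge0. Qed.

Lemma esqrt_le_sqr (x : \bar R) (c : R) : (0 <= x)%E -> 0 <= c ->
  (esqrt x <= c%:E)%E -> (x <= (c ^+ 2)%:E)%E.
Proof.
case: x => [r| |] //= r0 c0; rewrite !lee_fin => rc.
by rewrite -(sqr_sqrtr r0) lerXn2r // ?nnegrE ?sqrtr_ge0.
Qed.

Lemma L2sq_ge0 (T : R) n (v : R -> 'I_n -> R) : (0 <= L2sq T v)%E.
Proof. by apply: integral_ge0 => t _; rewrite lee_fin sqr_ge0. Qed.

Lemma memX_continuous (T : R) ny nu (y dy : R -> 'I_ny -> R) (u : R -> 'I_nu -> R) :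
  0 <= T -> memX T y dy u -> forall i, {within Icc 0 T, continuous (fun t => y t i)}.
Proof.
move=> T0 [_ intdy rep _ _] i.
have yE : {in Icc 0 T, (fun t => y 0 i + parameterized_integral mu 0 t (dy^~ i))
                       =1 (fun t => y t i)}.
  move=> t /set_mem; rewrite /Icc /= in_itv /= => /(rep i).
  rewrite /parameterized_integral /Rintegral /Icc.
  case: (\int[mu]_(x in `[0%R, t]) (dy x i)%:E)%E => [r| |] //=.
  by rewrite -EFinD => -[->].
apply: (subspace_eq_continuous yE) => x; apply: cvgD; first exact: cvg_cst.
exact: (parameterized_integral_continuous T0 (intdy i)).
Qed.

Section Xdist_bounds.
Variables (T c : R) (ny nu : nat) (ys dys Y dY : R -> 'I_ny -> R) (us U : R -> 'I_nu -> R).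
Hypotheses (T0 : 0 < T) (c0 : 0 < c)
  (dist_c : (Xdist T ys dys us Y dY U <= c%:E)%E).

Lemma Xdist_le_L2sq : (L2sq T (fun t => vsub (dys t) (dY t)) <= (c ^+ 2)%:E)%E.
Proof.
apply: esqrt_le_sqr (L2sq_ge0 _ _) (ltW c0) (le_trans _ dist_c).
by apply: leeDl; apply: esssup_on_ge0 T0 _ => t; exact: norminf_pair_ge0.
Qed.

(* Any bound above [c] would do: the infimum defining the essential supremum
   need not be attained. *)
Lemma Xdist_le_ae_norminf : {ae mu, forall t, Icc 0 T t ->
  norminf_pair (vsub (ys t) (Y t)) (vsub (us t) (U t)) <= 2 * c}.
Proof.
apply: (esssup_on_le_ae (c := c)); last by rewrite mulr_natl mulr2n ltrDl.
exact: le_trans (leeDr _ (esqrt_ge0 _)) dist_c.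
Qed.

Lemma Xdist_le_coord : memX T ys dys us ->
  (forall i, {within Icc 0 T, continuous (fun t => Y t i)}) ->
  forall x, Icc 0 T x -> forall i, `|ys x i - Y x i| <= 2 * c.
Proof.
move=> ysX Ycont x Tx i.
apply: (continuous_within_ae_normr_le (phi := fun t => ys t i - Y t i) T0 _ _ Tx).
  move=> t; apply: cvgB; [exact: memX_continuous (ltW T0) ysX i t | exact: Ycont].
apply: (filterS (F := almost_everywhere mu) _ Xdist_le_ae_norminf) => t dist_t Tt.
by have [+ _] := norminf_pair_le_coord (dist_t Tt); apply.
Qed.

Lemma Xdist_le_deviation k : (ny + ny + nu <= k)%N -> memX T ys dys us ->
  (forall i, {within Icc 0 T, continuous (fun t => Y t i)}) ->
  norm2_pair (vsub (ys 0) (Y 0)) (vsub (ys T) (Y T)) <= Num.sqrt k%:R * (2 * c) /\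
  {ae mu, forall t, Icc 0 T t ->
     norm2_pair (vsub (ys t) (Y t)) (vsub (us t) (U t)) <= Num.sqrt k%:R * (2 * c)}.
Proof.
move=> nk ysX Ycont; have c20 : 0 <= 2 * c by rewrite mulr_ge0 // ltW.
split.
  have I0 : Icc 0 T 0 by rewrite /Icc /= in_itv /= lexx ltW.
  have IT : Icc 0 T T by rewrite /Icc /= in_itv /= lexx ltW.
  apply: norm2_pair_le c20 (Xdist_le_coord ysX Ycont I0) (Xdist_le_coord ysX Ycont IT).
  exact: leq_trans (leq_addr _ _) nk.
apply: (filterS (F := almost_everywhere mu) _ Xdist_le_ae_norminf) => t dev_t Tt.
have [ys_c us_c] := norminf_pair_le_coord (dev_t Tt).
by apply: norm2_pair_le c20 ys_c us_c; apply: leq_trans nk; rewrite addnAC leq_addr.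
Qed.

End Xdist_bounds.
End X_distance.

Section residual_bounds.
Variables (R : realType) (T : R) (ny nu nb nc : nat).
Variables (M : ('I_ny -> R) -> ('I_ny -> R) -> R)
  (b : ('I_ny -> R) -> ('I_ny -> R) -> 'I_nb -> R)
  (f1 : ('I_ny -> R) -> ('I_nu -> R) -> R -> 'I_ny -> R)
  (f2 : ('I_ny -> R) -> ('I_nu -> R) -> R -> 'I_nc -> R)
  (yL yR : 'I_ny -> R) (uL uR : 'I_nu -> R).
Variables (ys dys Y dY : R -> 'I_ny -> R) (us U : R -> 'I_nu -> R).
Variables (lam Cl eps d : R).
Hypotheses (ysF : feasible T b f1 f2 yL yR uL uR ys dys us)
  (HA3 : A3 T M b f1 f2 ys us lam Cl eps) (d0 : 0 <= d) (d_eps : d <= eps).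
Local Notation mu := (@lebesgue_measure R).

Let holder_le z : 0 <= z -> z <= d -> Cl * z `^ lam <= Cl * d `^ lam.
Proof.
case: HA3 => [[/andP[lam0 _] Cl0 _] _ _ _] z0 zd.
by rewrite ler_wpM2l ?(ltW Cl0) // ge0_ler_powR ?nnegrE // ltW.
Qed.

Lemma boundary_residual_le :
  norm2_pair (vsub (ys 0) (Y 0)) (vsub (ys T) (Y T)) <= d ->
  norm2 (b (Y 0) (Y T)) <= Cl * d `^ lam.
Proof.
move=> end_d; case: HA3 => _ _ b_holder _; case: ysF => b0 _ _ _.
rewrite -norm2_vsub0l -b0; apply: le_trans (b_holder _ _ (le_trans end_d d_eps)) _.
exact: holder_le (sqrtr_ge0 _) end_d.
Qed.

Lemma dynamics_residual_ae_le :
  {ae mu, forall t, Icc 0 T t ->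
     norm2_pair (vsub (ys t) (Y t)) (vsub (us t) (U t)) <= d} ->
  {ae mu, forall t, Icc 0 T t ->
     norm2_pair (vsub (f1 (Y t) (U t) t) (dY t)) (f2 (Y t) (U t) t) ^+ 2
       <= 2 * (Cl * d `^ lam) ^+ 2 + 2 * norm2 (vsub (dys t) (dY t)) ^+ 2}.
Proof.
move=> ae_d; case: HA3 => _ _ _ f_holder; case: ysF => _ ae_dys ae_f2 _.
apply: (filterS3 (ae_filter_ringOfSetsType mu) _ ae_dys ae_f2 ae_d) => t dysE f2E dev_d Tt.
have t0T : 0 <= t <= T by move: Tt; rewrite /Icc /= in_itv.
have := le_trans (f_holder t t0T _ _ (le_trans (dev_d Tt) d_eps))
                 (holder_le (sqrtr_ge0 _) (dev_d Tt)).
rewrite -(dysE t0T) (f2E t0T) => f_d.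
apply: le_trans (sqr_norm2_pair_triangle _ (dys t) _ _) _.
rewrite lerD2r ler_wpM2l // lerXn2r ?nnegrE ?sqrtr_ge0 //.
exact: le_trans (sqrtr_ge0 _) f_d.
Qed.

Lemma dynamics_residual_integral_le (c : R) : 0 < T ->
  memX T ys dys us -> memX T Y dY U ->
  {ae mu, forall t, Icc 0 T t ->
     norm2_pair (vsub (ys t) (Y t)) (vsub (us t) (U t)) <= d} ->
  (L2sq T (fun t => vsub (dys t) (dY t)) <= (c ^+ 2)%:E)%E ->
  (\int[mu]_(t in Icc 0 T)
     ((norm2_pair (vsub (f1 (Y t) (U t) t) (dY t)) (f2 (Y t) (U t) t)) ^+ 2)%:E
   <= (2 * (Cl * d `^ lam) ^+ 2 * T + 2 * c ^+ 2)%:E)%E.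
Proof.
move=> T0 [_ int_dys _ _ _] [_ int_dY _ _ _] ae_d L2c.
set k := 2 * (Cl * d `^ lam) ^+ 2.
have k0 : 0 <= k by rewrite mulr_ge0 ?sqr_ge0.
pose g t := (norm2 (vsub (dys t) (dY t)) ^+ 2)%:E.
have mT : measurable (Icc 0 T) by exact: measurable_itv.
have g0 t : Icc 0 T t -> (0 <= g t)%E by rewrite lee_fin sqr_ge0.
have mg : measurable_fun (Icc 0 T) g.
  apply/measurable_EFinP; under eq_fun => t do rewrite norm2_sqr.
  apply: measurable_sum => i; apply: measurable_funX; apply: measurable_funB.
  - by apply/measurable_EFinP; exact: measurable_int (int_dys i).
  - by apply/measurable_EFinP; exact: measurable_int (int_dY i).
have int_kg : (\int[mu]_(t in Icc 0 T) (k%:E + 2%:E * g t)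
               = k%:E * T%:E + 2%:E * L2sq T (fun t => vsub (dys t) (dY t)))%E.
  rewrite ge0_integralD //; last 2 first.
  - by move=> t Tt; rewrite mule_ge0 ?g0.
  - exact: measurable_funeM.
  rewrite integral_cst // ge0_integralZl_EFin //.
  have muT : mu (Icc 0 T) = T%:E.
    by rewrite /Icc lebesgue_measure_itv /= lte_fin T0 /= oppr0 adde0.
  by congr (_ * _ + _)%E.
apply: le_trans (ae_ge0_le_integral_measurable_upper (mu := mu)
  (g := fun t => (k%:E + 2%:E * g t)%E) mT _ _ _ _) _.
- by move=> t _; rewrite lee_fin sqr_ge0.
- by move=> t Tt; rewrite adde_ge0 ?lee_fin // mulr_ge0 ?sqr_ge0.
- by apply: emeasurable_funD; [exact: measurable_cst | exact: measurable_funeM].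
- apply: (filterS (F := almost_everywhere mu) _ (dynamics_residual_ae_le ae_d)).
  move=> t res_t Tt.
  by rewrite -EFinM -EFinD lee_fin (res_t Tt).
rewrite int_kg -EFinM (EFinD (k * T)) leeD2l // EFinM.
exact: lee_wpmul2l.
Qed.

Lemma rsq_le_of_deviation (c : R) : 0 < T ->
  memX T ys dys us -> memX T Y dY U ->
  norm2_pair (vsub (ys 0) (Y 0)) (vsub (ys T) (Y T)) <= d ->
  {ae mu, forall t, Icc 0 T t ->
     norm2_pair (vsub (ys t) (Y t)) (vsub (us t) (U t)) <= d} ->
  (L2sq T (fun t => vsub (dys t) (dY t)) <= (c ^+ 2)%:E)%E ->
  (rsq T b f1 f2 Y dY U
     <= ((2 * T + 1) * (Cl * d `^ lam) ^+ 2 + 2 * c ^+ 2)%:E)%E.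
Proof.
move=> T0 ysX YX end_d ae_d L2c; have b_le := boundary_residual_le end_d.
apply: le_trans (leeD (dynamics_residual_integral_le T0 ysX YX ae_d L2c)
                      (_ : _ <= ((Cl * d `^ lam) ^+ 2)%:E)%E) _.
  by rewrite lee_fin lerXn2r ?nnegrE ?sqrtr_ge0 // (le_trans (sqrtr_ge0 _) b_le).
by rewrite -EFinD lee_fin le_eqVlt; apply/orP; left; apply/eqP; ring.
Qed.

End residual_bounds.

Section mesh_rates.
Variable R : realType.

Lemma is_mesh_gt0 (T : R) N tm h : is_mesh T N tm h -> 0 < h.
Proof.
case=> + _ _ tm_lt ->; case: N tm_lt => [//|N] tm_lt _.
apply: lt_le_trans (le_bigmax _ (fun k : 'I_N.+1 => tm k.+1 - tm k) ord0).
by rewrite subr_gt0; apply: tm_lt.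
Qed.

Lemma powR_le_of_le_powRV (h x r : R) : 0 <= h -> 0 <= x -> 0 < r ->
  h <= x `^ r^-1 -> h `^ r <= x.
Proof.
move=> h0 x0 r0 hx; apply: le_trans (ge0_ler_powR (ltW r0) _ _ hx) _.
- by rewrite nnegrE.
- by rewrite nnegrE powR_ge0.
by rewrite -powRrM mulVf ?gt_eqF // powRr1.
Qed.

Lemma residual_rate (T Cl Ceta K lam eta h : R) :
  0 <= T -> 0 <= Ceta -> 0 <= K -> 0 < lam <= 1 -> 0 < eta -> 0 < h <= 1 ->
  (2 * T + 1) * (Cl * (K * h `^ eta) `^ lam) ^+ 2 + 2 * (Ceta * h `^ eta) ^+ 2
    <= ((2 * T + 1) * (Cl * K `^ lam) ^+ 2 + 2 * Ceta ^+ 2) * h `^ (2 * lam * eta).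
Proof.
move=> T0 Ceta0 K0 /andP[lam0 lam1] eta0 /andP[h0 h1].
set x := h `^ (lam * eta).
have x2 : h `^ (2 * lam * eta) = x ^+ 2.
  by rewrite /x -powR_mulrn ?powR_ge0 // -powRrM (mulrC (lam * eta)) mulrA.
have KhE : (K * h `^ eta) `^ lam = K `^ lam * x.
  by rewrite powRM ?powR_ge0 // -powRrM (mulrC eta).
have hx : h `^ eta <= x by rewrite ger_powR ?h0 ?h1 //; nra.
rewrite x2 KhE.
have -> : ((2 * T + 1) * (Cl * K `^ lam) ^+ 2 + 2 * Ceta ^+ 2) * x ^+ 2
        = (2 * T + 1) * (Cl * (K `^ lam * x)) ^+ 2 + 2 * (Ceta * x) ^+ 2 by ring.
rewrite lerD2l ler_wpM2l // lerXn2r ?nnegrE ?mulr_ge0 ?powR_ge0 //.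
exact: ler_wpM2l.
Qed.

End mesh_rates.

Theorem mainTheorem18 (R : realType) (T : R) (ny nu nb nc p : nat)
    (M : ('I_ny -> R) -> ('I_ny -> R) -> R)
    (b : ('I_ny -> R) -> ('I_ny -> R) -> 'I_nb -> R)
    (f1 : ('I_ny -> R) -> ('I_nu -> R) -> R -> 'I_ny -> R)
    (f2 : ('I_ny -> R) -> ('I_nu -> R) -> R -> 'I_nc -> R)
    (yL yR : 'I_ny -> R) (uL uR : 'I_nu -> R)
    (ys dys : R -> 'I_ny -> R) (us : R -> 'I_nu -> R)
    (samp : nat -> (nat -> R) -> set R)
    (yh dyh : nat -> (nat -> R) -> R -> 'I_ny -> R)
    (uh : nat -> (nat -> R) -> R -> 'I_nu -> R)
    (h0 eta Ceta lam Cl eps : R) :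
  0 < T -> (0 < p)%N ->
  (forall i, yL i <= yR i) -> (forall j, uL j <= uR j) ->
  local_minimizer T M b f1 f2 yL yR uL uR ys dys us ->
  (* approximability, with (yh N tm, uh N tm) the fixed approximating pair
     for the mesh (N, tm) of size h *)
  0 < h0 -> 0 < eta -> 0 < Ceta ->
  (forall N tm h, is_mesh T N tm h -> h <= h0 ->
     [/\ memX T (yh N tm) (dyh N tm) (uh N tm),
         in_Bhp T p N tm (samp N tm) yL yR uL uR (yh N tm) (uh N tm) &
         (Xdist T ys dys us (yh N tm) (dyh N tm) (uh N tm)
            <= (Ceta * h `^ eta)%:E)%E ]) ->
  A3 T M b f1 f2 ys us lam Cl eps ->
  exists2 Cr : R, 0 < Cr &
    exists2 h1 : R, 0 < h1 &
      forall N tm h, is_mesh T N tm h -> h <= h1 ->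
        (rsq T b f1 f2 (yh N tm) (dyh N tm) (uh N tm)
           <= (Cr * h `^ (2 * lam * eta))%:E)%E.
Proof.
move=> T0 _ _ _ [ysX ysF _] h00 eta0 Ceta0 approx HA3.
have [[lam01 Cl0 eps0] _ _ _] := HA3.
(* The successor keeps [K] positive even when [ny = nu = 0]. *)
pose k := (ny + ny + nu).+1.
pose K := Num.sqrt k%:R * (2 * Ceta).
have K0 : 0 < K by rewrite mulr_gt0 ?sqrtr_gt0 ?ltr0Sn ?mulr_gt0.
exists ((2 * T + 1) * (Cl * K `^ lam) ^+ 2 + 2 * Ceta ^+ 2).
  apply: ltr_wpDl; last by rewrite mulr_gt0 ?exprn_gt0.
  by rewrite mulr_ge0 ?sqr_ge0 // addr_ge0 ?mulr_ge0 ?ltW.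
exists (Num.min h0 (Num.min 1 ((eps / K) `^ eta^-1))).
  by rewrite !lt_min h00 ltr01 powR_gt0 // divr_gt0.
move=> N tm h mesh; rewrite !le_min => /and3P[hh0 h1 h_eps].
have h_gt0 := is_mesh_gt0 mesh.
have [YX [[Ycont _ _] _] dist_c] := approx N tm h mesh hh0.
have c0 : 0 < Ceta * h `^ eta by rewrite mulr_gt0 ?powR_gt0.
have [end_d ae_d] := Xdist_le_deviation T0 c0 dist_c (leqnSn _) ysX Ycont.
have dE : Num.sqrt k%:R * (2 * (Ceta * h `^ eta)) = K * h `^ eta by rewrite /K; ring.
rewrite dE in end_d ae_d.
apply: le_trans (rsq_le_of_deviation ysF HA3 _ _ T0 ysX YX end_d ae_d
                   (Xdist_le_L2sq T0 c0 dist_c)) _.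
- by rewrite mulr_ge0 ?powR_ge0 ?ltW.
- rewrite -ler_pdivlMl // mulrC.
  by apply: powR_le_of_le_powRV => //; rewrite ltW ?divr_gt0.
by rewrite lee_fin residual_rate ?h_gt0 ?h1 // ltW.
Qed.
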